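(* With notation as in the context, the subgroup $R[\{1,2,\dots,n+1\}]$ of $\mathcal{G}^{*J}_n$ equals the product of the iterated commutator subgroups $[[\dots[R_{i_1,j_1},R_{i_2,j_2}],\dots],R_{i_t,j_t}]$ over those sequences of pairs $1\leq i_s<j_s\leq n+1$ such that (1) $\{i_1,j_1,\dots,i_t,j_t\}=\{1,2,\dots,n+1\}$ and (2) $\{i_1,j_1,\dots,i_t,j_t\}\setminus\{i_p,j_p\}\neq\{1,2,\dots,n+1\}$ for every $1\leq p\leq t$.
   Context: $J$ is a set; $\mathcal{G}^{*J}_n$ is the free group on letters $x_{i,j}(\alpha)$, $1\leq i<j\leq n+1$, $\alpha\in J$ (the $n$-th group of a free product of copies of a simplicial free group $\mathcal{G}$ with $\mathcal{G}_n$ free on $x_{i,j}$). $R_{i,j}$ is the normal closure of $\{x_{i,j}(\alpha)\mid\alpha\in J\}$ in $\mathcal{G}^{*J}_n$. $R[\{1,\dots,n+1\}]$ is the product of all iterated commutator subgroups $[[\dots[R_{i_1,j_1},R_{i_2,j_2}],\dots],R_{i_t,j_t}]$, $t\geq1$, over all sequences of pairs with $\{1,\dots,n+1\}\subseteq\{i_1,j_1,\dots,i_t,j_t\}$ (for $t=1$ the subgroup is $R_{i_1,j_1}$). *)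

From mathcomp Require Import all_boot.
Set Implicit Arguments. Unset Strict Implicit. Unset Printing Implicit Defensive.

Record grp := Grp {
  carrier :> Type;
  gmul : carrier -> carrier -> carrier;
  gone : carrier;
  ginv : carrier -> carrier;
  gmulA : forall a b c, gmul a (gmul b c) = gmul (gmul a b) c;
  gmul1 : forall a, gmul gone a = a;
  gmulV : forall a, gmul (ginv a) a = gone }.

Definition ghom (G H : grp) (f : G -> H) : Prop :=
  forall a b, f (gmul a b) = gmul (f a) (f b).

Definition IsFree (L : Type) (G : grp) (x : L -> G) : Prop :=
  forall (H : grp) (f : L -> H),
    exists phi : G -> H, ghom phi /\ (forall l, phi (x l) = f l) /\
      (forall psi : G -> H, ghom psi -> (forall l, psi (x l) = f l) ->
         forall g, psi g = phi g).

Definition is_subgroup (G : grp) (H : G -> Prop) : Prop :=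
  H (gone G) /\ (forall a b, H a -> H b -> H (gmul a b)) /\ (forall a, H a -> H (ginv a)).

Definition gen (G : grp) (S : G -> Prop) : G -> Prop :=
  fun g => forall H : G -> Prop, is_subgroup H -> (forall s, S s -> H s) -> H g.

Definition conjg (G : grp) (s g : G) : G := gmul (ginv g) (gmul s g).
Definition commg (G : grp) (a b : G) : G :=
  gmul (gmul (ginv a) (ginv b)) (gmul a b).

Definition normal_closure (G : grp) (S : G -> Prop) : G -> Prop :=
  gen (fun h => exists s g, S s /\ h = conjg s g).

Definition comm_sub (G : grp) (A B : G -> Prop) : G -> Prop :=
  gen (fun h => exists a b, A a /\ B b /\ h = commg a b).

Definition pairs (n : nat) : Type :=
  {p : nat * nat | (0 < p.1) && (p.1 < p.2) && (p.2 <= n.+1)}.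

Definition letter (n : nat) (J : Type) : Type := (pairs n * J)%type.

Definition Rij (n : nat) (J : Type) (G : grp) (x : letter n J -> G)
  (p : pairs n) : G -> Prop :=
  normal_closure (fun g => exists a : J, g = x (p, a)).

(* [[...[R_{p0}, R_{p1}], ...], R_{pt}] for the sequence p0 :: s *)
Definition iter_comm (n : nat) (G : grp) (R : pairs n -> G -> Prop)
  (p0 : pairs n) (s : seq (pairs n)) : G -> Prop :=
  foldl (fun H p => comm_sub H (R p)) (R p0) s.

Definition in_support (n : nat) (s : seq (pairs n)) (k : nat) : bool :=
  has (fun p : pairs n => (k == (val p).1) || (k == (val p).2)) s.

Definition covers (n : nat) (s : seq (pairs n)) : Prop :=
  forall k, 1 <= k <= n.+1 -> in_support s k.

Definition minimal_cover (n : nat) (s : seq (pairs n)) : Prop :=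
  forall q, q < size s -> ~ covers (take q s ++ drop q.+1 s).

Definition Rfull (n : nat) (J : Type) (G : grp) (x : letter n J -> G) : G -> Prop :=
  gen (fun g => exists (p0 : pairs n) (s : seq (pairs n)),
         covers (p0 :: s) /\ iter_comm (Rij x) p0 s g).

Definition Rminimal (n : nat) (J : Type) (G : grp) (x : letter n J -> G) : G -> Prop :=
  gen (fun g => exists (p0 : pairs n) (s : seq (pairs n)),
         covers (p0 :: s) /\ minimal_cover (p0 :: s) /\
         iter_comm (Rij x) p0 s g).

From Stdlib Require Import Classical.
From mathcomp Require Import all_boot zify.
Set Implicit Arguments. Unset Strict Implicit.

(* For normal subgroups A and B, the commutator subgroup [A, B] lies in both A
   and B, so deleting one term from a sequence of pairs can only enlarge the
   iterated commutator subgroup it indexes.  Repeatedly deleting a pair whose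
   removal keeps {1, ..., n+1} covered therefore ends, after finitely many
   steps, at a minimal covering sequence whose subgroup contains the original
   one. *)

Section GroupFacts.
Variable G : grp.
Implicit Types a b c g h s : G.

Lemma gmulrV a : gmul a (ginv a) = gone G.
Proof.
transitivity (gmul (gmul (ginv (ginv a)) (ginv a)) (gmul a (ginv a))).
  by rewrite gmulV gmul1.
by rewrite -gmulA (gmulA (ginv a) a) gmulV gmul1 gmulV.
Qed.

Lemma gmulr1 a : gmul a (gone G) = a.
Proof. by rewrite -(gmulV a) gmulA gmulrV gmul1. Qed.

Lemma ginv_uniq a b : gmul b a = gone G -> b = ginv a.
Proof. by move=> ba1; rewrite -(gmulr1 b) -(gmulrV a) gmulA ba1 gmul1. Qed.

Lemma ginvK a : ginv (ginv a) = a.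
Proof. by symmetry; apply: ginv_uniq; rewrite gmulrV. Qed.

Lemma ginvM a b : ginv (gmul a b) = gmul (ginv b) (ginv a).
Proof.
by symmetry; apply: ginv_uniq; rewrite -gmulA (gmulA (ginv a)) gmulV gmul1 gmulV.
Qed.

Lemma conj1g c : conjg (gone G) c = gone G.
Proof. by rewrite /conjg gmul1 gmulV. Qed.

Lemma conjMg a b c : conjg (gmul a b) c = gmul (conjg a c) (conjg b c).
Proof. by rewrite /conjg !gmulA -(gmulA _ c) gmulrV gmulr1. Qed.

Lemma conjVg a c : conjg (ginv a) c = ginv (conjg a c).
Proof. by rewrite /conjg !ginvM ginvK !gmulA. Qed.

Lemma conjgM s g c : conjg (conjg s g) c = conjg s (gmul g c).
Proof. by rewrite /conjg ginvM !gmulA. Qed.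

Lemma conjRg a b c : conjg (commg a b) c = commg (conjg a c) (conjg b c).
Proof. by rewrite /commg !conjMg !conjVg. Qed.

Definition included (A B : G -> Prop) : Prop := forall g, A g -> B g.

Definition normal (A : G -> Prop) : Prop := forall h c, A h -> A (conjg h c).

Lemma gen_subgroup (S : G -> Prop) : is_subgroup (gen S).
Proof.
split; [|split].
- by move=> H [].
- move=> a b Sa Sb H subH SH; case: (subH) => _ [HM _].
  exact: HM (Sa H subH SH) (Sb H subH SH).
- move=> a Sa H subH SH; case: (subH) => _ [_ HV].
  exact: HV (Sa H subH SH).
Qed.

Lemma mem_gen (S : G -> Prop) s : S s -> gen S s.
Proof. by move=> Ss H _; apply. Qed.

Lemma gen_subG (S H : G -> Prop) :
  is_subgroup H -> included S H -> included (gen S) H.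
Proof. by move=> subH SH g; apply. Qed.

Lemma gen_normal (S : G -> Prop) :
  (forall s c, S s -> S (conjg s c)) -> normal (gen S).
Proof.
move=> nS h c Sh; pose K g := forall c, gen S (conjg g c).
have [S1 [SM SV]] := gen_subgroup S.
suff /(_ c) : K h by [].
apply: (@gen_subG S K) Sh => [|s Ss d]; last exact: mem_gen (nS s d Ss).
split; [|split] => [d|a b Ka Kb d|a Ka d]; first by rewrite conj1g; exact: S1.
  by rewrite conjMg; apply: SM.
by rewrite conjVg; apply: SV.
Qed.

Lemma normal_closure_normal (S : G -> Prop) : normal (normal_closure S).
Proof.
apply: gen_normal => _ c [s [g [Ss ->]]].
by exists s, (gmul g c); rewrite conjgM.
Qed.

Lemma comm_sub_normal (A B : G -> Prop) :
  normal A -> normal B -> normal (comm_sub A B).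
Proof.
move=> nA nB; apply: gen_normal => _ c [a [b [Aa [Bb ->]]]].
by exists (conjg a c), (conjg b c); rewrite conjRg; split; [apply: nA | split; [apply: nB|]].
Qed.

Lemma comm_subSl (A B : G -> Prop) :
  is_subgroup A -> normal A -> included (comm_sub A B) A.
Proof.
move=> subA nA; apply: gen_subG => // _ [a [b [Aa [_ ->]]]].
have ->: commg a b = gmul (ginv a) (conjg a b) by rewrite /commg /conjg !gmulA.
by case: subA => _ [AM AV]; apply: AM; [apply: AV | apply: nA].
Qed.

Lemma comm_subSr (A B : G -> Prop) :
  is_subgroup B -> normal B -> included (comm_sub A B) B.
Proof.
move=> subB nB; apply: gen_subG => // _ [a [b [_ [Bb ->]]]].
have ->: commg a b = gmul (conjg (ginv b) a) b by rewrite /commg /conjg !gmulA.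
by case: subB => _ [BM BV]; apply: BM => //; apply/nB/BV.
Qed.

Lemma comm_subS (A A' B B' : G -> Prop) :
  included A A' -> included B B' -> included (comm_sub A B) (comm_sub A' B').
Proof.
move=> AA' BB'; apply: gen_subG => [|_ [a [b [Aa [Bb ->]]]]].
  exact: gen_subgroup.
by apply: mem_gen; exists a, b; split; [apply: AA' | split; [apply: BB'|]].
Qed.

End GroupFacts.

Definition rem_nth (T : Type) (q : nat) (s : seq T) : seq T :=
  take q s ++ drop q.+1 s.

Lemma size_rem_nth (T : Type) (q : nat) (s : seq T) :
  q < size s -> size (rem_nth q s) = (size s).-1.
Proof. by move=> lt_q_s; rewrite size_cat size_take size_drop lt_q_s; lia. Qed.

Lemma not_covers_nil (n : nat) : ~ covers (n := n) [::].
Proof. by move/(_ 1 isT). Qed.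

Lemma not_minimal_cover (n : nat) (s : seq (pairs n)) :
  ~ minimal_cover s -> exists2 q, q < size s & covers (rem_nth q s).
Proof.
move=> not_min; have [q not_q] := not_all_ex_not _ _ not_min.
have [lt_q_s not_cov_q] := imply_to_and _ _ not_q.
by exists q; last exact: NNPP.
Qed.

Section IteratedCommutators.
Variables (n : nat) (G : grp) (R : pairs n -> G -> Prop).
Hypotheses (R_subgroup : forall p, is_subgroup (R p))
           (R_normal : forall p, normal (R p)).

Let comm_step (H : G -> Prop) (p : pairs n) : G -> Prop := comm_sub H (R p).

Lemma foldl_comm_subS (X Y : G -> Prop) (s : seq (pairs n)) :
  included X Y -> included (foldl comm_step X s) (foldl comm_step Y s).
Proof.
by elim: s X Y => [|p s IHs] X Y //= XY; apply: IHs; apply: comm_subS.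
Qed.

Lemma foldl_comm_rem_nth (X : G -> Prop) (q : nat) (s : seq (pairs n)) :
  is_subgroup X -> normal X -> q < size s ->
  included (foldl comm_step X s) (foldl comm_step X (rem_nth q s)).
Proof.
elim: s X q => [|p s IHs] X [|q] //= subX nX lt_q_s.
  by rewrite /rem_nth /= drop0; apply: foldl_comm_subS; apply: comm_subSl.
by apply: IHs => //; [apply: gen_subgroup | apply: comm_sub_normal].
Qed.

Lemma iter_comm_rem_nth (p0 p2 : pairs n) (s s2 : seq (pairs n)) (q : nat) :
  q < size (p0 :: s) -> rem_nth q (p0 :: s) = p2 :: s2 ->
  included (iter_comm R p0 s) (iter_comm R p2 s2).
Proof.
rewrite /iter_comm; case: q => [|q] /= lt_q_s; rewrite /rem_nth /=.
  by rewrite drop0 => -> /=; apply: foldl_comm_subS; apply: comm_subSr.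
by case=> <- <-; apply: foldl_comm_rem_nth.
Qed.

Lemma exists_minimal_cover (p1 : pairs n) (s1 : seq (pairs n)) :
  covers (p1 :: s1) ->
  exists p0 s, [/\ covers (p0 :: s), minimal_cover (p0 :: s) &
                  included (iter_comm R p1 s1) (iter_comm R p0 s)].
Proof.
have [N] := ubnP (size s1); elim: N p1 s1 => // N IHN p1 s1 lt_s1_N cov1.
have [min1 | /not_minimal_cover [q lt_q cov_q]] := classic (minimal_cover (p1 :: s1)).
  by exists p1, s1; split=> // g.
have size_q := size_rem_nth lt_q.
case E: (rem_nth q (p1 :: s1)) cov_q size_q => [|p2 s2] cov2 size2.
  by case: (not_covers_nil cov2).
have /(IHN p2 s2) [|p0 [s [cov0 min0 sub20]]] := cov2; first by move: size2 => /=; lia.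
by exists p0, s; split=> // g /(iter_comm_rem_nth lt_q E); apply: sub20.
Qed.

End IteratedCommutators.

Theorem lemma3p6 (J : Type) (n : nat) (G : grp) (x : letter n J -> G)
  (Hfree : IsFree x) :
  forall g : G, Rfull x g <-> Rminimal x g.
Proof.
have Rfull_sub : included (Rfull x) (Rminimal x).
  apply: gen_subG => [|g [p1 [s1 [cov1 in_s1]]]]; first exact: gen_subgroup.
  have Rij_subgroup p : is_subgroup (Rij x p) by apply: gen_subgroup.
  have Rij_normal p : normal (Rij x p) by apply: normal_closure_normal.
  have [p0 [s [cov0 min0 sub10]]] :=
    exists_minimal_cover Rij_subgroup Rij_normal cov1.
  by apply: mem_gen; exists p0, s; split; [|split; last exact: sub10].
have Rminimal_sub : included (Rminimal x) (Rfull x).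
  apply: gen_subG => [|g [p1 [s1 [cov1 [_ in_s1]]]]]; first exact: gen_subgroup.
  by apply: mem_gen; exists p1, s1.
by move=> g; split; [apply: Rfull_sub | apply: Rminimal_sub].
Qed.
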